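(* Let $k\ge0$, $n,q\ge1$, $\mathcal{X}\subset\mathbb{R}^n$ open, and let $\Psi\in C^0(\mathcal{X},\mathbb{R}^q)$ if $k=0$, or $\Psi\in C^k_b(\mathcal{X},\mathbb{R}^q)$ if $k\ge1$, be globally Lipschitz continuous with constant $K_\Psi\in[0,\infty)$. Fix $m\ge n+q$, $\tau\in[0,T]$, $w,\tilde w\in(0,\infty)$ and $K\in[0,\infty)$ with $$KT\ \ge\ \frac{K_\Psi}{w\tilde w}.$$ Then there exists an augmented neural DDE $\Phi\in\mathrm{NDDE}^k_\tau(\mathcal{X},\mathbb{R}^q)$ in dimension $m$ with $\Phi(x)=\Psi(x)$ for all $x\in\mathcal{X}$, whose vector field $F:\mathbb{R}\times\Omega_y\to\mathbb{R}^m$ is globally Lipschitz continuous in the second variable on $\mathbb{R}\times\Omega_0$ with constant $K$, where $\Omega_0=\{c_{\lambda(x)}:x\in\mathcal{X}\}\subset\Omega_y$, and whose weight matrices satisfy $\|W\|_\infty=w$, $\|\tilde W\|_\infty=\tilde w$.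
   Context: Throughout, $\|\cdot\|_\infty$ denotes the max-norm on $\mathbb{R}^d$ and, for a matrix $A\in\mathbb{R}^{r\times s}$, the induced norm $\|A\|_\infty=\max_{\|x\|_\infty=1}\|Ax\|_\infty$. Fix $T>0$, a delay $\tau\in[0,T]$ and $m\ge1$, and let $\mathcal{C}=C^0([-\tau,0],\mathbb{R}^m)$ with norm $\|u\|_\infty=\sup_{s\in[-\tau,0]}\|u(s)\|_\infty$. For a function $y$ defined on $[t-\tau,t]$, $y_t\in\mathcal{C}$ is $y_t(s)=y(t+s)$. For $a\in\mathbb{R}^m$, $c_a\in\mathcal{C}$ is the constant function $c_a(s)=a$. Given $F:\Omega\to\mathbb{R}^m$, $\Omega\subset\mathbb{R}\times\mathcal{C}$ open, and $(t_0,u)\in\Omega$, a solution of the DDE $\frac{dy}{dt}=F(t,y_t)$ ($t\ge t_0$), $y_{t_0}=u$, is a continuous $y:[t_0-\tau,t_0+c)\to\mathbb{R}^m$, $c\in(0,\infty]$, with $y_{t_0}=u$, $(t,y_t)\in\Omega$ and $y'(t)=F(t,y_t)$ for $t\in[t_0,t_0+c)$; it is denoted $y(t_0,u)$. $\mathcal{I}_a$ denotes the maximal interval of existence of $y(0,c_a)$. For $k\ge1$, $C^{0,k}_b(\Omega,\mathbb{R}^m)$ denotes the continuous maps $F$ on $\Omega$ that are $k$ times continuously Fréchet differentiable in the second variable with the derivatives of orders $1,\dots,k$ bounded on $\Omega$. Neural DDE: let $n,q\ge1$, $\mathcal{X}\subset\mathbb{R}^n$ open, $\lambda(x)=Wx+b$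 with $W\in\mathbb{R}^{m\times n}$, $b\in\mathbb{R}^m$, $\tilde\lambda(y)=\tilde Wy+\tilde b$ with $\tilde W\in\mathbb{R}^{q\times m}$, $\tilde b\in\mathbb{R}^q$, and $F:\Omega_t\times\Omega_y\to\mathbb{R}^m$ with $\Omega_t\subset\mathbb{R}$, $\Omega_y\subset\mathcal{C}$ open, satisfying the well-definedness conditions: $[0,T]\subset\Omega_t$, $\Omega_0:=\{c_{\lambda(x)}:x\in\mathcal{X}\}\subset\Omega_y$, and $[-\tau,T]\subset\mathcal{I}_{\lambda(x)}$ for all $x\in\mathcal{X}$. The associated neural DDE is $\Phi:\mathcal{X}\to\mathbb{R}^q$, $\Phi(x)=\tilde\lambda(y(0,c_{\lambda(x)})(T))$. For $k\ge1$, $\mathrm{NDDE}^k_\tau(\mathcal{X},\mathbb{R}^q)$ is the set of all such $\Phi$ with $F\in C^{0,k}_b(\Omega_t\times\Omega_y,\mathbb{R}^m)$; $\mathrm{NDDE}^0_\tau(\mathcal{X},\mathbb{R}^q)$ is the set of all such $\Phi$ for which the solutions $y(0,c_{\lambda(x)})$ are unique and continuous (and $\Phi$ is continuous). $\Phi$ is non-augmented if $m\le\max\{n,q\}$ and augmented if $m>\max\{n,q\}$. $C^k_b(\mathcal{X},\mathbb{R}^q)$ denotes the $k$ times continuously differentiable maps whose derivatives of orders $1,\dots,k$ are bounded on $\mathcal{X}$. Global Lipschitz continuity of $F$ in the second variable on $\mathbb{R}\times\Omega_0$ with constant $K$ means $\|F(t,u)-F(t,v)\|_\infty\le K\|u-v\|_\infty$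 for all $t\in\mathbb{R}$, $u,v\in\Omega_0$. *)

(* R : realType, vectors in R^d are column vectors 'cV[R]_d,
   whose MathComp-Analysis norm `|.| is the max-norm. *)
From HB Require Import structures.
From mathcomp Require Import all_boot all_order all_algebra.
From mathcomp Require Import all_classical all_reals all_analysis.
Set Implicit Arguments. Unset Strict Implicit. Unset Printing Implicit Defensive.
Import Order.TTheory GRing.Theory Num.Theory.
Import numFieldNormedType.Exports.
Local Open Scope classical_set_scope.
Local Open Scope ring_scope.

Section Defs.
Variable R : realType.

Definition opnorm (r s : nat) (A : 'M[R]_(r, s)) : R :=
  sup [set `|A *m x| | x in [set x : 'cV[R]_s | `|x| = 1]].

(** The phase space C = C^0([-tau,0], R^m).  An element u of C is represented by
    its canonical extension to R, constant on (-oo,-tau] and on [0,+oo):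
    u s = u (clamp tau s).  This is a bijective representation. *)
Definition clamp (tau s : R) : R := Num.max (- tau) (Num.min s 0).

Definition Cspace (tau : R) (m : nat) : set (R -> 'cV[R]_m) :=
  [set u | continuous u /\ forall s, u s = u (clamp tau s)].

Arguments Cspace (tau m) : clear implicits.

Definition normC (tau : R) (m : nat) (u : R -> 'cV[R]_m) : R :=
  sup [set `|u s| | s in [set s | - tau <= s <= 0]].

Arguments normC tau {m} u.

Definition seg (tau : R) (m : nat) (y : R -> 'cV[R]_m) (t : R) : R -> 'cV[R]_m :=
  fun s => y (t + clamp tau s).

Definition cstC (m : nat) (a : 'cV[R]_m) : R -> 'cV[R]_m := fun _ => a.

Definition openC (tau : R) (m : nat) (O : set (R -> 'cV[R]_m)) : Prop :=
  O `<=` Cspace tau m /\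
  forall u, O u -> exists2 r : R, 0 < r &
    forall v, Cspace tau m v -> normC tau (v - u) < r -> O v.

(** * C^{0,k}_b : continuous maps F on Om, k times continuously Frechet
   differentiable in the second variable, derivatives of orders 1..k bounded on Om.
   The second variable lives in an ambient set S of an lmodType V with norm nV;
   D j t u is the j-th Frechet derivative in u, a j-linear map on S^j
   (arguments hs 0, ..., hs (j-1)). Operator norms are expressed by the
   usual bound |L hs| <= M * prod_i nV (hs i). *)
Definition upd (V : Type) (hs : nat -> V) (i : nat) (x : V) : nat -> V :=
  fun l => if l == i then x else hs l.

Definition ncons (V : Type) (h : V) (hs : nat -> V) : nat -> V :=
  fun l => if l is l'.+1 then hs l' else h.

Definition Ck0b (V : lmodType R) (nV : V -> R) (S : set V) (p : nat) (k : nat)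
    (Om : set (R * V)) (F : R -> V -> 'cV[R]_p) : Prop :=
  exists D : nat -> R -> V -> (nat -> V) -> 'cV[R]_p,
  [/\
      (forall t u hs, Om (t, u) -> D 0%N t u hs = F t u),
      (forall j t u, (j <= k)%N -> Om (t, u) ->
         (forall hs hs', (forall i, (i < j)%N -> hs i = hs' i) -> D j t u hs = D j t u hs') /\
         (forall hs i a x y, (i < j)%N -> (forall l, S (hs l)) -> S x -> S y ->
            D j t u (upd hs i (a *: x + y)) = a *: D j t u (upd hs i x) + D j t u (upd hs i y))),
      (forall j t u, (j < k)%N -> Om (t, u) -> forall e : R, 0 < e ->
         exists2 d : R, 0 < d & forall h, S h -> nV h < d -> Om (t, u + h) ->
           forall hs, (forall l, S (hs l)) ->
             `|D j t (u + h) hs - D j t u hs - D j.+1 t u (ncons h hs)|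
               <= e * nV h * \prod_(i < j) nV (hs i)),
      (forall j t u, (j <= k)%N -> Om (t, u) -> forall e : R, 0 < e ->
         exists2 d : R, 0 < d & forall s v, Om (s, v) -> `|s - t| < d -> nV (v - u) < d ->
           forall hs, (forall l, S (hs l)) ->
             `|D j s v hs - D j t u hs| <= e * \prod_(i < j) nV (hs i)) &
      (forall j, (1 <= j <= k)%N -> exists M : R, forall t u hs, Om (t, u) ->
         (forall l, S (hs l)) -> `|D j t u hs| <= M * \prod_(i < j) nV (hs i))].

Definition Ckb (n q k : nat) (X : set 'cV[R]_n) (Psi : 'cV[R]_n -> 'cV[R]_q) : Prop :=
  @Ck0b 'cV[R]_n (fun x => `|x|) setT q k [set p | X p.2] (fun _ => Psi).

(** * Solutions of dy/dt = F(t, y_t), t >= 0, y_0 = u, on [-tau, c), c in (0, +oo]. *)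
Definition is_sol (tau : R) (m : nat) (Omt : set R) (Omy : set (R -> 'cV[R]_m))
    (F : R -> (R -> 'cV[R]_m) -> 'cV[R]_m) (u : R -> 'cV[R]_m) (c : \bar R)
    (y : R -> 'cV[R]_m) : Prop :=
  [/\ (0 < c)%E,
      (forall t, - tau <= t -> (t%:E < c)%E -> forall e : R, 0 < e ->
         exists2 d : R, 0 < d & forall s, - tau <= s -> (s%:E < c)%E -> `|s - t| < d ->
           `|y s - y t| < e),
      (forall s, - tau <= s <= 0 -> y s = u s),
      (forall t, 0 <= t -> (t%:E < c)%E -> Omt t /\ Omy (seg tau y t) ) &
      (forall t, 0 <= t -> (t%:E < c)%E -> forall e : R, 0 < e ->
         exists2 d : R, 0 < d & forall h, h != 0 -> `|h| < d -> 0 <= t + h ->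
           ((t + h)%:E < c)%E ->
           `|h^-1 *: (y (t + h) - y t) - F t (seg tau y t)| <= e)].

Definition is_NDDE (k n m q : nat) (tau T : R) (X : set 'cV[R]_n)
    (Omt : set R) (Omy : set (R -> 'cV[R]_m)) (F : R -> (R -> 'cV[R]_m) -> 'cV[R]_m)
    (W : 'M[R]_(m, n)) (b : 'cV[R]_m) (Wt : 'M[R]_(q, m)) (bt : 'cV[R]_q)
    (Phi : 'cV[R]_n -> 'cV[R]_q) : Prop :=
  let lam := fun x : 'cV[R]_n => W *m x + b in
  [/\ open Omt /\ openC tau Omy,
      [set t | 0 <= t <= T] `<=` Omt,
      (forall x, X x -> Omy (cstC (lam x))),
      (forall x, X x -> exists c : \bar R, exists y, (T%:E < c)%E /\
         is_sol tau Omt Omy F (cstC (lam x)) c y /\ Phi x = Wt *m y T + bt) &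
      (if k == 0%N then
         (forall x, X x -> forall c1 y1 c2 y2,
            is_sol tau Omt Omy F (cstC (lam x)) c1 y1 ->
            is_sol tau Omt Omy F (cstC (lam x)) c2 y2 ->
            forall t, - tau <= t -> (t%:E < c1)%E -> (t%:E < c2)%E -> y1 t = y2 t) /\
         {within X, continuous Phi}
       else
         @Ck0b (R -> 'cV[R]_m) (@normC tau m) (Cspace tau m) m k
               [set p | Omt p.1 /\ Omy p.2] F)].

End Defs.

From Pilot Require Import Defs.
From HB Require Import structures.
From mathcomp Require Import all_boot all_order all_algebra.
From mathcomp Require Import all_classical all_reals all_analysis.
From mathcomp Require Import lra ring zify.
Import Order.TTheory GRing.Theory Num.Theory.
Import numFieldNormedType.Exports.
Set Implicit Arguments.
Unset Strict Implicit.
Unset Printing Implicit Defensive.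
Local Open Scope classical_set_scope.
Local Open Scope ring_scope.

(* Let E0 and E1 embed R^n and R^q into the coordinates 0..n-1 and n..n+q-1 of R^m, and take
   W = w E0, Wt = wt E1^T, b = bt = 0.  The vector field
     F(t, u) = (T wt)^-1 E1 Psi(w^-1 E0^T u(0))
   reads the input x back from the first block of the current state and pushes the second block
   with speed Psi(x) / (T wt).  F has no component in the first block, so along any solution
   started at c_{Wx} that block stays Wx; hence F is constant along the solution, which is the
   unique affine path y(t) = Wx + max(0, t) (T wt)^-1 E1 Psi(x), and Wt y(T) = Psi(x).
   F inherits the regularity of Psi since it is Psi composed with bounded linear maps, and on
   Omega_0 its Lipschitz constant is K_Psi / (T w wt) <= K. *)

Lemma subrACA (V : zmodType) (a b c d : V) : (a - b) - (c - d) = (a - c) - (b - d).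
Proof. by rewrite opprD addrACA -opprD. Qed.

Section MatrixNorm.
Variable R : realType.

Lemma mx_norm_ge_entry {p r} (x : 'M[R]_(p, r)) i j : `|x i j| <= `|x|.
Proof.
change `|x| with (mx_norm x); rewrite mx_normrE.
exact: (le_bigmax _ (fun ij : _ * _ => `|x ij.1 ij.2|) (i, j)).
Qed.

Lemma mx_norm_le_entries {p r} (x : 'M[R]_(p, r)) M :
  0 <= M -> (forall i j, `|x i j| <= M) -> `|x| <= M.
Proof.
move=> M0 xM; change `|x| with (mx_norm x); rewrite mx_normrE.
by apply: bigmax_le => // -[i j] _; exact: xM.
Qed.

Lemma mx_norm_const1 p : (0 < p)%N -> `|(const_mx 1 : 'cV[R]_p)| = 1.
Proof.
move=> p0; apply/le_anti/andP; split.
  by apply: mx_norm_le_entries => // i j; rewrite mxE normr1.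
by have := mx_norm_ge_entry (const_mx 1 : 'cV[R]_p) (Ordinal p0) ord0; rewrite mxE normr1.
Qed.

Lemma mx_norm_mul_select r p s (P : 'I_r -> pred 'I_p) (y : 'M[R]_(p, s)) :
  (forall i j j', P i j -> P i j' -> j = j') ->
  `|(\matrix_(i, j) (P i j)%:R : 'M[R]_(r, p)) *m y| <= `|y|.
Proof.
move=> P_uniq; apply: mx_norm_le_entries => // i k; rewrite !mxE.
under eq_bigr do rewrite mxE.
have [j0 Pj0 | P0] := pickP (P i).
  rewrite (bigD1 j0) //= Pj0 mul1r big1 ?addr0 ?mx_norm_ge_entry // => j jj0.
  case Pj: (P i j); last by rewrite mul0r.
  by rewrite (P_uniq _ _ _ Pj Pj0) eqxx in jj0.
by rewrite big1 ?normr0 // => j _; rewrite P0 mul0r.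
Qed.

Lemma opnorm_eq r s (A : 'M[R]_(r, s)) (a : R) (x0 : 'cV[R]_s) :
  (forall x : 'cV[R]_s, `|A *m x| <= a * `|x|) -> `|x0| = 1 -> `|A *m x0| = a -> opnorm A = a.
Proof.
move=> Aa x01 Ax0; rewrite /opnorm; set S := [set _ | _ in _].
have Sa : S a by exists x0.
have ubS : ubound S a.
  by move=> _ [x /= x1 <-]; rewrite -[leRHS]mulr1 -x1 Aa.
apply/le_anti/andP; split; first by apply: ge_sup => //; exists a.
by apply: sup_upper_bound => //; split; [exists a | exists a].
Qed.

End MatrixNorm.

Section EmbedMatrix.
Variable R : realType.

Definition embed_mx (o p m : nat) : 'M[R]_(m, p) := \matrix_(i, j) ((i : nat) == (o + j)%N)%:R.

Lemma tr_embed_mx_mul_self {o p m} : (o + p <= m)%N ->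
  (embed_mx o p m)^T *m embed_mx o p m = 1%:M.
Proof.
move=> opm; apply/matrixP => i k; rewrite !mxE.
under eq_bigr do rewrite !mxE.
have oim : (o + i < m)%N by apply: leq_trans opm; rewrite ltn_add2l.
rewrite (bigD1 (Ordinal oim)) //= eqxx mul1r eqn_add2l big1 ?addr0 // => j /eqP ji.
by case: eqP => [jo|]; rewrite ?mul0r //; case: ji; exact: val_inj.
Qed.

Lemma tr_embed_mx_mul_disjoint o1 p1 o2 p2 m : (o1 + p1 <= o2)%N || (o2 + p2 <= o1)%N ->
  (embed_mx o2 p2 m)^T *m embed_mx o1 p1 m = 0.
Proof.
move=> le12; apply/matrixP => i k; rewrite !mxE big1 // => j _; rewrite !mxE.
case: eqP => [->|]; last by rewrite mul0r.
case: eqP => [/eqP|]; last by rewrite mulr0.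
by have := ltn_ord i; have := ltn_ord k; lia.
Qed.

Lemma mx_norm_embed_mx_mul_le {o p m s} (y : 'M[R]_(p, s)) : `|embed_mx o p m *m y| <= `|y|.
Proof.
apply: mx_norm_mul_select => i j j' /eqP ij /eqP ij'.
by apply/val_inj/eqP; rewrite /= -(eqn_add2l o) -ij -ij'.
Qed.

Lemma mx_norm_tr_embed_mx_mul_le {o p m s} (y : 'M[R]_(m, s)) :
  `|(embed_mx o p m)^T *m y| <= `|y|.
Proof.
have -> : (embed_mx o p m)^T = \matrix_(i, j) ((j : nat) == (o + i)%N)%:R.
  by apply/matrixP => i j; rewrite !mxE.
by apply: mx_norm_mul_select => i j j' /eqP ij /eqP ij'; apply: val_inj; rewrite /= ij ij'.
Qed.

Lemma mx_norm_embed_mx_mul {o p m s} (y : 'M[R]_(p, s)) : (o + p <= m)%N ->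
  `|embed_mx o p m *m y| = `|y|.
Proof.
move=> opm; apply/le_anti; rewrite mx_norm_embed_mx_mul_le /=.
rewrite -{1}(mul1mx y) -(tr_embed_mx_mul_self opm) -mulmxA.
exact: mx_norm_tr_embed_mx_mul_le.
Qed.

End EmbedMatrix.
Arguments embed_mx {R} o p m.

Lemma lipschitz_within_continuous (R : realType) (V W : normedModType R)
    (A : set V) (f : V -> W) (k : R) :
  (forall x y, A x -> A y -> `|f x - f y| <= k * `|x - y|) -> {within A, continuous f}.
Proof.
move=> fk; apply/subspace_continuousP => x Ax; apply/cvgrPdist_lt => e e0.
have k1 : 0 < `|k| + 1 by rewrite ltr_wpDl.
rewrite near_withinE; near=> y => Ay.
apply: le_lt_trans (fk x y Ax Ay) _.
apply: le_lt_trans (_ : (`|k| + 1) * `|x - y| < e).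
  by apply: ler_wpM2r => //; have := ler_norm k; lra.
rewrite -ltr_pdivlMl //; near: y; apply: cvgr_dist_lt => //.
by rewrite mulr_gt0 // invr_gt0.
Unshelve. all: by end_near.
Qed.

Section Clamp.
Variable R : realType.

Lemma ler_dist_max2l (c a b : R) : `|Num.max c a - Num.max c b| <= `|a - b|.
Proof.
case: (leP c a) => ca; case: (leP c b) => cb; rewrite ?subrr ?normr0 //.
- by rewrite !ger0_norm; lra.
- by rewrite !ler0_norm; lra.
Qed.

Lemma ler_dist_min2l (c a b : R) : `|Num.min c a - Num.min c b| <= `|a - b|.
Proof.
case: (leP c a) => ca; case: (leP c b) => cb; rewrite ?subrr ?normr0 //.
- by rewrite !ger0_norm; lra.
- by rewrite !ler0_norm; lra.
Qed.

Lemma clamp_id (tau s : R) : - tau <= s <= 0 -> clamp tau s = s.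
Proof. by case/andP => taus s0; rewrite /clamp (min_l s0) (max_r taus). Qed.

Lemma clamp_itv (tau s : R) : 0 <= tau -> - tau <= clamp tau s <= 0.
Proof.
move=> tau0; rewrite /clamp le_max lexx /= ge_max ge_min lexx orbT andbT.
by rewrite lerNl oppr0.
Qed.

Lemma clamp_idem (tau s : R) : 0 <= tau -> clamp tau (clamp tau s) = clamp tau s.
Proof. by move=> tau0; rewrite clamp_id // clamp_itv. Qed.

Lemma clamp0 (tau : R) : 0 <= tau -> clamp tau 0 = 0.
Proof. by move=> tau0; rewrite clamp_id // lexx andbT lerNl oppr0. Qed.

Lemma ler_dist_clamp (tau s s' : R) : `|clamp tau s - clamp tau s'| <= `|s - s'|.
Proof.
apply: le_trans (ler_dist_max2l _ _ _) _.
by rewrite /clamp (minC s) (minC s'); exact: ler_dist_min2l.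
Qed.

Lemma CspaceB (tau : R) p (u v : R -> 'cV[R]_p) :
  Cspace tau u -> Cspace tau v -> Cspace tau (u - v).
Proof.
move=> [u_cont u_clamp] [v_cont v_clamp]; split=> [s|s].
  by apply: continuousB; [exact: u_cont | exact: v_cont].
by change (u s - v s = u (clamp tau s) - v (clamp tau s)); rewrite -u_clamp -v_clamp.
Qed.

Lemma normC_ge_point (tau : R) p (u : R -> 'cV[R]_p) s : 0 <= tau -> continuous u ->
  - tau <= s <= 0 -> `|u s| <= normC tau u.
Proof.
move=> tau0 u_cont s_itv.
have [c _ c_max] : exists2 c : R, c \in `[- tau, 0] &
    forall t, t \in `[- tau, 0] -> `|u t| <= `|u c|.
  apply: EVT_max; first by rewrite lerNl oppr0.
  by apply: continuous_subspaceT => x; apply: continuous_comp (u_cont x) _; exact: norm_continuous.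
apply: ub_le_sup; last by exists s.
by exists `|u c| => _ [t t_itv <-]; apply: c_max; rewrite in_itv.
Qed.

End Clamp.

Section Ico0.
Variables (R : realType) (c : \bar R).
Implicit Types (t : R).

Definition continuous_on_Ico0 p (g : R -> 'cV[R]_p) := forall t, 0 <= t -> (t%:E < c)%E ->
  forall e, 0 < e -> exists2 d, 0 < d & forall s, 0 <= s -> (s%:E < c)%E ->
    `|s - t| < d -> `|g s - g t| < e.

Definition rderive_on_Ico0 p (g g' : R -> 'cV[R]_p) := forall t, 0 <= t -> (t%:E < c)%E ->
  forall e, 0 < e -> exists2 d, 0 < d & forall h, 0 < h -> h < d -> ((t + h)%:E < c)%E ->
    `|h^-1 *: (g (t + h) - g t) - g' t| <= e.

End Ico0.

Section RightDerivative.
Variables (R : realType) (p : nat) (c : \bar R).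
Implicit Types (g : R -> 'cV[R]_p) (t : R).

Lemma lte_fin_trans (a b : R) : a <= b -> (b%:E < c)%E -> (a%:E < c)%E.
Proof. by move=> ab; apply: le_lt_trans; rewrite lee_fin. Qed.

Definition growth_set g (e t : R) :=
  [set s | 0 <= s <= t /\ forall r, 0 <= r <= s -> `|g r - g 0| <= e * r].

Lemma growth_set0 g e t : 0 <= t -> growth_set g e t 0.
Proof.
move=> t0; split; first by rewrite lexx t0.
by move=> r /andP[r0 r0']; rewrite (@le_anti _ _ r 0) ?r0 ?r0' // subrr normr0 mulr0.
Qed.

Lemma has_sup_growth_set g e t : 0 <= t -> has_sup (growth_set g e t).
Proof. by move=> t0; split; [exists 0; exact: growth_set0 | exists t => s [/andP[]]]. Qed.

Lemma growth_set_sup g e t : 0 <= e -> continuous_on_Ico0 c g -> 0 <= t -> (t%:E < c)%E ->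
  growth_set g e t (sup (growth_set g e t)).
Proof.
move=> e0 g_cont t0 tc; have supA := has_sup_growth_set g e t0.
set A := growth_set g e t; set S := sup A.
have S0 : 0 <= S by apply: sup_upper_bound => //; exact: growth_set0.
have St : S <= t by apply: ge_sup; [case: supA | move=> s [/andP[]]].
have below_S r : 0 <= r -> r < S -> `|g r - g 0| <= e * r.
  move=> r0 rS; have Sr0 : 0 < S - r by rewrite subr_gt0.
  have [a [_ Aa] ra] := sup_adherent Sr0 supA.
  by apply: Aa; rewrite r0 /=; rewrite -/S in ra; lra.
have at_S : `|g S - g 0| <= e * S.
  apply/ler_addgt0Pr => eta eta0.
  have [d d0 Hd] := g_cont S S0 (lte_fin_trans St tc) eta eta0.
  have [a Aa] := sup_adherent d0 supA; rewrite -/S => ra.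
  have aS : a <= S by exact: sup_upper_bound.
  case: Aa => /andP[a0 _] Aa.
  have ga : `|g a - g S| < eta.
    apply: Hd => //; last by rewrite ler0_norm; lra.
    exact: lte_fin_trans aS (lte_fin_trans St tc).
  have := Aa a (introT andP (conj a0 (lexx a))).
  have := ler_normD (g S - g a) (g a - g 0); rewrite distrC addrA subrK.
  have : e * a <= e * S by rewrite ler_wpM2l.
  lra.
split; first by rewrite S0 St.
move=> r /andP[r0 rS]; have [rS'|] := ltrP r S; first exact: below_S.
by move=> Sr; rewrite (@le_anti _ _ r S) ?rS ?Sr.
Qed.

(* Real induction: the growth set is closed by continuity and open to the right by the local
   bound, so its supremum is t. *)
Lemma Ico0_growth_le {g} (e : R) : 0 <= e -> continuous_on_Ico0 c g ->
  (forall t, 0 <= t -> (t%:E < c)%E -> exists2 d, 0 < d & forall h, 0 < h -> h < d ->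
     ((t + h)%:E < c)%E -> `|g (t + h) - g t| <= e * h) ->
  forall t, 0 <= t -> (t%:E < c)%E -> `|g t - g 0| <= e * t.
Proof.
move=> e0 g_cont g_loc t t0 tc; have supA := has_sup_growth_set g e t0.
have AS := growth_set_sup e0 g_cont t0 tc.
set A := growth_set g e t in supA AS *; set S := sup A in AS *.
have [S0 St] : 0 <= S /\ S <= t by case: AS => /andP.
have [St'|tS] := ltrP S t; last by case: AS => _; apply; rewrite t0 tS.
exfalso; have [d d0 Hd] := g_loc S S0 (lte_fin_trans St tc).
pose h := Num.min (d / 2) (t - S).
have h0 : 0 < h by rewrite lt_min divr_gt0 // subr_gt0.
have hd : h < d by rewrite /h gt_min ltr_pdivrMr //; lra.
have htS : h <= t - S by rewrite /h ge_min lexx orbT.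
suff /(sup_upper_bound supA) : A (S + h) by rewrite -/S; lra.
split; first by apply/andP; split; lra.
move=> r /andP[r0 rSh]; have [rS|Sr] := lerP r S; first by case: AS => _; apply; rewrite r0.
have gr : `|g r - g S| <= e * (r - S).
  have := Hd (r - S) ltac:(lra) ltac:(lra); rewrite [S + _]addrC subrK.
  by apply; apply: lte_fin_trans tc; lra.
have := ler_normD (g r - g S) (g S - g 0); rewrite addrA subrK.
by case: AS => _ /(_ S); rewrite S0 lexx => /(_ isT); lra.
Qed.

Lemma rderive0_const {g} : continuous_on_Ico0 c g -> rderive_on_Ico0 c g (fun=> 0) ->
  forall t, 0 <= t -> (t%:E < c)%E -> g t = g 0.
Proof.
move=> g_cont g_der t t0 tc.
have g_loc e : 0 < e -> forall s, 0 <= s -> (s%:E < c)%E -> exists2 d, 0 < d &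
    forall h, 0 < h -> h < d -> ((s + h)%:E < c)%E -> `|g (s + h) - g s| <= e * h.
  move=> e0 s s0 sc; have [d d0 hd] := g_der s s0 sc e e0.
  exists d => // h h0 hd' shc; have := hd h h0 hd' shc.
  by rewrite subr0 normrZ gtr0_norm ?invr_gt0 // mulrC ler_pdivrMr.
apply/eqP; rewrite -subr_eq0 -normr_le0; apply/ler_addgt0Pr => eta eta0.
have t1 : 0 < t + 1 by rewrite ltr_wpDl.
have e0 : 0 < eta / (t + 1) by rewrite divr_gt0.
apply: le_trans (Ico0_growth_le (ltW e0) g_cont (g_loc _ e0) t0 tc) _.
by rewrite add0r mulrAC ler_pdivrMr //; nra.
Qed.

Lemma rderive_const_affine {g} (v : 'cV[R]_p) : continuous_on_Ico0 c g ->
  rderive_on_Ico0 c g (fun=> v) -> forall t, 0 <= t -> (t%:E < c)%E -> g t = g 0 + t *: v.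
Proof.
move=> g_cont g_der t t0 tc.
have f_cont : continuous_on_Ico0 c (fun s => g s - s *: v).
  move=> s s0 sc e e0.
  have v1 : 0 < `|v| + 1 by rewrite ltr_wpDl.
  have e2 : 0 < e / 2 by rewrite divr_gt0.
  have [d d0 hd] := g_cont s s0 sc (e / 2) e2.
  exists (Num.min d (e / 2 / (`|v| + 1))); first by rewrite lt_min d0 divr_gt0.
  move=> r r0 rc; rewrite lt_min => /andP[rd rv].
  have := hd r r0 rc rd; rewrite ltr_pdivlMr // in rv.
  have -> : g r - r *: v - (g s - s *: v) = (g r - g s) - (r - s) *: v.
    by rewrite subrACA scalerBl.
  have := ler_normB (g r - g s) ((r - s) *: v); rewrite normrZ.
  have := normr_ge0 v; have := normr_ge0 (r - s); nra.
have f_der : rderive_on_Ico0 c (fun s => g s - s *: v) (fun=> 0).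
  move=> s s0 sc e e0; have [d d0 hd] := g_der s s0 sc e e0.
  exists d => // h h0 hd' shc; rewrite subr0.
  have -> : g (s + h) - (s + h) *: v - (g s - s *: v) = (g (s + h) - g s) - h *: v.
    by rewrite subrACA scalerDl [s *: v + _]addrC addrK.
  by rewrite scalerBr scalerA mulVf ?gt_eqF // scale1r; exact: hd.
have := rderive0_const f_cont f_der t0 tc; rewrite scale0r subr0 => <-.
by rewrite subrK.
Qed.

Lemma eq_rderive_on_Ico0 g (g1' g2' : R -> 'cV[R]_p) :
  (forall t, 0 <= t -> (t%:E < c)%E -> g1' t = g2' t) ->
  rderive_on_Ico0 c g g1' -> rderive_on_Ico0 c g g2'.
Proof. by move=> g12 g_der t t0 tc; rewrite -g12 //; exact: g_der. Qed.

Variables (r : nat) (A : 'M[R]_(r, p)).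
Hypothesis A_nonexpansive : forall z : 'cV[R]_p, `|A *m z| <= `|z|.

Lemma continuous_on_Ico0_mulmx g :
  continuous_on_Ico0 c g -> continuous_on_Ico0 c (fun t => A *m g t).
Proof.
move=> g_cont t t0 tc e e0; have [d d0 hd] := g_cont t t0 tc e e0.
exists d => // s s0 sc st; rewrite -mulmxBr.
by apply: le_lt_trans (A_nonexpansive _) _; exact: hd.
Qed.

Lemma rderive_on_Ico0_mulmx g g' :
  rderive_on_Ico0 c g g' -> rderive_on_Ico0 c (fun t => A *m g t) (fun t => A *m g' t).
Proof.
move=> g_der t t0 tc e e0; have [d d0 hd] := g_der t t0 tc e e0.
exists d => // h h0 hd' thc; rewrite -mulmxBr scalemxAr -mulmxBr.
by apply: le_trans (A_nonexpansive _) _; exact: hd.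
Qed.

End RightDerivative.

Section Ck0bLinearComp.
Variables (R : realType) (V : lmodType R) (nV : V -> R) (S : set V).
Variables (n q p k : nat) (X : set 'cV[R]_n) (Psi : 'cV[R]_n -> 'cV[R]_q).
Variables (L : V -> 'cV[R]_n) (B : 'M[R]_(p, q)) (a b : R) (Om : set (R * V)).
Hypotheses (Psi_Ck : Ckb k X Psi) (L_lin : linear L) (a0 : 0 < a) (b0 : 0 < b).
Hypothesis L_bound : forall h, S h -> `|L h| <= a * nV h.
Hypothesis B_bound : forall z : 'cV[R]_q, `|B *m z| <= b * `|z|.
Hypothesis S_sub : forall u v, S u -> S v -> S (u - v).
Hypothesis Om_X : forall t u, Om (t, u) -> S u /\ X (L u).

Lemma linearD_fun u v : L (u + v) = L u + L v.
Proof. by have := L_lin 1 u v; rewrite !scale1r. Qed.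

Lemma linearB_fun u v : L (u - v) = L u - L v.
Proof. by rewrite -scaleN1r addrC L_lin scaleN1r addrC. Qed.

Lemma prod_norm_L_le j (hs : nat -> V) : (forall l, S (hs l)) ->
  \prod_(i < j) `|L (hs i)| <= a ^+ j * \prod_(i < j) nV (hs i).
Proof.
move=> Shs; have -> : a ^+ j * \prod_(i < j) nV (hs i) = \prod_(i < j) (a * nV (hs i)).
  by rewrite big_split /= prodr_const card_ord.
by apply: ler_prod => i _; rewrite normr_ge0 L_bound.
Qed.

Definition map_seq (hs : nat -> V) (i : nat) := L (hs i).

Lemma map_seq_upd hs i x : map_seq (upd hs i x) = upd (map_seq hs) i (L x).
Proof. by apply: funext => l; rewrite /map_seq /upd; case: eqP. Qed.

Lemma map_seq_ncons h hs : map_seq (Defs.ncons h hs) = Defs.ncons (L h) (map_seq hs).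
Proof. by apply: funext => -[]. Qed.

Section Derivatives.
Variable D : nat -> R -> 'cV[R]_n -> (nat -> 'cV[R]_n) -> 'cV[R]_q.

Definition comp_derivative j (t : R) u hs := B *m D j 0 (L u) (map_seq hs).

Hypothesis D_frechet : forall j t x, (j < k)%N -> X x -> forall e : R, 0 < e ->
  exists2 d : R, 0 < d & forall h, setT h -> `|h| < d -> X (x + h) ->
    forall hs, (forall l, setT (hs l)) ->
      `|D j t (x + h) hs - D j t x hs - D j.+1 t x (Defs.ncons h hs)|
        <= e * `|h| * \prod_(i < j) `|hs i|.

Lemma comp_derivative_frechet j t u : (j < k)%N -> Om (t, u) -> forall e : R, 0 < e ->
  exists2 d : R, 0 < d & forall h, S h -> nV h < d -> Om (t, u + h) ->
    forall hs, (forall l, S (hs l)) ->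
      `|comp_derivative j t (u + h) hs - comp_derivative j t u hs
        - comp_derivative j.+1 t u (Defs.ncons h hs)| <= e * nV h * \prod_(i < j) nV (hs i).
Proof.
move=> jk /Om_X[_ XLu] e e0.
have e'0 : 0 < e / (b * a ^+ j.+1) by rewrite divr_gt0 ?mulr_gt0 ?exprn_gt0.
have [d d0 Hd] := D_frechet 0 jk XLu e'0.
exists (d / a) => [|h Sh hd /Om_X[_ XLuh] hs Shs]; first by rewrite divr_gt0.
have Lh_le := L_bound Sh.
have Lh_lt : `|L h| < d by apply: le_lt_trans Lh_le _; rewrite mulrC -ltr_pdivlMr.
rewrite linearD_fun in XLuh; rewrite /comp_derivative linearD_fun map_seq_ncons -!mulmxBr.
apply: le_trans (B_bound _) _.
apply: le_trans (ler_wpM2l (ltW b0) (Hd (L h) I Lh_lt XLuh (map_seq hs) (fun=> I))) _.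
set P := \prod_(i < j) _; set N := \prod_(i < j) _; set e' := e / _.
have P0 : 0 <= P by apply: prodr_ge0 => i _.
have -> : b * (e' * `|L h| * P) = e' * `|L h| * (b * P) by ring.
have -> : e * nV h * N = e' * (a * nV h) * (b * (a ^+ j * N)).
  by rewrite /e' exprS; field; rewrite expf_neq0 ?gt_eqF.
apply: ler_pM; first exact: mulr_ge0 (ltW e'0) (normr_ge0 _).
- exact: mulr_ge0 (ltW b0) P0.
- by apply: ler_wpM2l; [exact: ltW | exact: Lh_le].
- by apply: ler_wpM2l; [exact: ltW | exact: prod_norm_L_le].
Qed.

Hypothesis D_cont : forall j t x, (j <= k)%N -> X x -> forall e : R, 0 < e ->
  exists2 d : R, 0 < d & forall s y, X y -> `|s - t| < d -> `|y - x| < d ->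
    forall hs, (forall l, setT (hs l)) -> `|D j s y hs - D j t x hs| <= e * \prod_(i < j) `|hs i|.

Lemma comp_derivative_continuous j t u : (j <= k)%N -> Om (t, u) -> forall e : R, 0 < e ->
  exists2 d : R, 0 < d & forall s v, Om (s, v) -> `|s - t| < d -> nV (v - u) < d ->
    forall hs, (forall l, S (hs l)) ->
      `|comp_derivative j s v hs - comp_derivative j t u hs| <= e * \prod_(i < j) nV (hs i).
Proof.
move=> jk /Om_X[Su XLu] e e0.
have e'0 : 0 < e / (b * a ^+ j) by rewrite divr_gt0 ?mulr_gt0 ?exprn_gt0.
have [d d0 Hd] := D_cont 0 jk XLu e'0.
exists (d / a) => [|s v /Om_X[Sv XLv] _ vu hs Shs]; first by rewrite divr_gt0.
have Lvu : `|L v - L u| < d.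
  rewrite -linearB_fun; apply: le_lt_trans (L_bound (S_sub Sv Su)) _.
  by rewrite mulrC -ltr_pdivlMr.
have := Hd 0 (L v) XLv; rewrite subrr normr0 => /(_ d0 Lvu (map_seq hs) (fun=> I)) HD.
rewrite -mulmxBr; apply: le_trans (B_bound _) _.
apply: le_trans (ler_wpM2l (ltW b0) HD) _.
set e' := e / _; rewrite /map_seq mulrCA.
apply: le_trans (ler_wpM2l (ltW e'0) (ler_wpM2l (ltW b0) (prod_norm_L_le j Shs))) _.
have -> : e' * (b * (a ^+ j * \prod_(i < j) nV (hs i))) = e * \prod_(i < j) nV (hs i).
  by rewrite /e'; field; rewrite expf_neq0 ?gt_eqF.
by [].
Qed.

End Derivatives.

Lemma Ck0b_linear_comp : @Ck0b R V nV S p k Om (fun _ u => B *m Psi (L u)).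
Proof.
case: Psi_Ck => D [D0 D_lin D_frechet D_cont D_bnd].
exists (comp_derivative D); split.
- by move=> t u hs /Om_X[_ XLu]; rewrite /comp_derivative D0.
- move=> j t u jk /Om_X[_ XLu]; have [D_dep D_mlin] := D_lin j 0 (L u) jk XLu; split.
    move=> hs hs' hs_eq; rewrite /comp_derivative (D_dep (map_seq hs) (map_seq hs')) //.
    by move=> i ij; rewrite /map_seq hs_eq.
  move=> hs i x y z ij _ _ _.
  by rewrite /comp_derivative !map_seq_upd L_lin D_mlin // mulmxDr -scalemxAr.
- exact: comp_derivative_frechet D_frechet.
- exact: comp_derivative_continuous D_cont.
- move=> j /andP[j1 jk]; have [M HM] := D_bnd j (introT andP (conj j1 jk)).
  exists (b * `|M| * a ^+ j) => t u hs /Om_X[_ XLu] Shs.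
  apply: le_trans (B_bound _) _; rewrite -!mulrA; apply: ler_wpM2l; first exact: ltW.
  apply: le_trans (HM 0 (L u) (map_seq hs) XLu (fun=> I)) _.
  have P0 : 0 <= \prod_(i < j) `|map_seq hs i| by apply: prodr_ge0 => i _.
  apply: le_trans (ler_wpM2r P0 (ler_norm M)) _.
  by apply: ler_wpM2l; [exact: normr_ge0 | exact: prod_norm_L_le].
Qed.

End Ck0bLinearComp.

Section SolutionRegularity.
Variables (R : realType) (m : nat) (tau : R) (Omt : set R) (Omy : set (R -> 'cV[R]_m)).
Variables (F : R -> (R -> 'cV[R]_m) -> 'cV[R]_m) (u : R -> 'cV[R]_m) (c : \bar R).
Variables (y : R -> 'cV[R]_m).
Hypotheses (tau0 : 0 <= tau) (y_sol : is_sol tau Omt Omy F u c y).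

Lemma is_sol_continuous_on_Ico0 : continuous_on_Ico0 c y.
Proof.
case: y_sol => _ y_cont _ _ _ t t0 tc e e0.
have tau_le s : 0 <= s -> - tau <= s by move=> s0; apply: le_trans s0; rewrite lerNl oppr0.
have [d d0 hd] := y_cont t (tau_le _ t0) tc e e0.
by exists d => // s s0 sc st; apply: hd => //; exact: tau_le.
Qed.

Lemma is_sol_rderive_on_Ico0 : rderive_on_Ico0 c y (fun t => F t (seg tau y t)).
Proof.
case: y_sol => _ _ _ _ y_der t t0 tc e e0.
have [d d0 hd] := y_der t t0 tc e e0.
exists d => // h h0 hd' thc.
apply: hd => //; [by rewrite gt_eqF | by rewrite gtr0_norm | by rewrite addr_ge0 // ltW].
Qed.

End SolutionRegularity.

Section Construction.
Variables (R : realType) (n q m : nat) (tau T w wt : R).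
Hypotheses (nqm : (n + q <= m)%N) (tau0 : 0 <= tau) (T0 : 0 < T) (w0 : 0 < w) (wt0 : 0 < wt).
Variables (X : set 'cV[R]_n) (Psi : 'cV[R]_n -> 'cV[R]_q).

Definition embed_in : 'M[R]_(m, n) := w *: embed_mx 0 n m.
Definition read_out : 'M[R]_(q, m) := wt *: (embed_mx n q m)^T.
Definition drift : 'M[R]_(m, q) := (T * wt)^-1 *: embed_mx n q m.
Definition input_of (u : R -> 'cV[R]_m) : 'cV[R]_n := w^-1 *: ((embed_mx 0 n m)^T *m u 0).
Definition vector_field (t : R) (u : R -> 'cV[R]_m) : 'cV[R]_m := drift *m Psi (input_of u).
Definition phase_set : set (R -> 'cV[R]_m) := [set u | Cspace tau u /\ X (input_of u)].
Definition affine_sol (x : 'cV[R]_n) (s : R) : 'cV[R]_m :=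
  embed_in *m x + Num.max 0 s *: (drift *m Psi x).

Let nm : (0 + n <= m)%N. Proof. by apply: leq_trans nqm; rewrite leq_addr. Qed.

Lemma norm_embed_in_mul (x : 'cV[R]_n) : `|embed_in *m x| = w * `|x|.
Proof. by rewrite -scalemxAl normrZ gtr0_norm // mx_norm_embed_mx_mul. Qed.

Lemma norm_read_out_mul_le (y : 'cV[R]_m) : `|read_out *m y| <= wt * `|y|.
Proof.
rewrite -scalemxAl normrZ gtr0_norm //.
by apply: ler_wpM2l; [exact: ltW | exact: mx_norm_tr_embed_mx_mul_le].
Qed.

Lemma norm_drift_mul_le (z : 'cV[R]_q) : `|drift *m z| <= (T * wt)^-1 * `|z|.
Proof.
rewrite -scalemxAl normrZ gtr0_norm ?invr_gt0 ?mulr_gt0 //.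
by apply: ler_wpM2l; [rewrite invr_ge0 mulr_ge0 // ltW | exact: mx_norm_embed_mx_mul_le].
Qed.

Lemma read_out_drift (z : 'cV[R]_q) : read_out *m (drift *m z) = T^-1 *: z.
Proof.
rewrite /read_out /drift -!scalemxAl -scalemxAr mulmxA tr_embed_mx_mul_self // mul1mx.
by rewrite scalerA invfM mulrCA mulfV ?mulr1 // gt_eqF.
Qed.

Lemma read_out_embed_in (x : 'cV[R]_n) : read_out *m (embed_in *m x) = 0.
Proof.
rewrite /read_out /embed_in -!scalemxAl -scalemxAr mulmxA.
by rewrite tr_embed_mx_mul_disjoint ?add0n ?leqnn // mul0mx !scaler0.
Qed.

Lemma input_of_affine u x a (z : 'cV[R]_q) :
  u 0 = embed_in *m x + a *: (drift *m z) -> input_of u = x.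
Proof.
rewrite /input_of => ->; rewrite /embed_in /drift mulmxDr -!scalemxAl -!scalemxAr !mulmxA.
rewrite tr_embed_mx_mul_self // tr_embed_mx_mul_disjoint ?add0n ?leqnn ?orbT //.
by rewrite mul0mx !scaler0 addr0 mul1mx scalerA mulVf ?gt_eqF ?scale1r.
Qed.

Lemma input_of_cst x : input_of (cstC (embed_in *m x)) = x.
Proof. by apply: (@input_of_affine _ _ 0 0); rewrite scale0r addr0. Qed.

Lemma input_of_linear : linear input_of.
Proof. by move=> a u v; rewrite /input_of /= mulmxDr -scalemxAr scalerDr !scalerA mulrC. Qed.

Lemma norm_input_of_le h : continuous h -> `|input_of h| <= w^-1 * normC tau h.
Proof.
move=> h_cont; rewrite /input_of normrZ gtr0_norm ?invr_gt0 //.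
apply: ler_wpM2l; first by rewrite invr_ge0 ltW.
apply: le_trans (mx_norm_tr_embed_mx_mul_le (h 0)) _; apply: normC_ge_point => //.
by rewrite lexx andbT lerNl oppr0.
Qed.

Lemma read_out_affine_sol x : read_out *m affine_sol x T = Psi x.
Proof.
rewrite /affine_sol mulmxDr read_out_embed_in add0r -scalemxAr read_out_drift.
by rewrite max_r ?ltW // scalerA mulfV ?gt_eqF ?scale1r.
Qed.


Lemma openC_phase_set : open X -> Defs.openC tau phase_set.
Proof.
move=> X_open; split=> [u []//|u [Cu Xu]].
have /nbhs_ballP[r r0 ballX] : nbhs (input_of u) X by apply: open_nbhs_nbhs.
exists (r * w) => [|v Cv vu]; first by rewrite mulr_gt0.
split=> //; apply: ballX; rewrite mx_norm_ball /ball_ /= distrC.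
have vu_cont : continuous (v - u) by move=> s; apply: continuousB; [exact: Cv.1 | exact: Cu.1].
rewrite -(linearB_fun input_of_linear).
by apply: le_lt_trans (norm_input_of_le vu_cont) _; rewrite mulrC ltr_pdivrMr.
Qed.


Lemma affine_solB x s t :
  affine_sol x s - affine_sol x t = (Num.max 0 s - Num.max 0 t) *: (drift *m Psi x).
Proof. by rewrite /affine_sol opprD addrACA subrr add0r -scalerBl. Qed.

Lemma affine_sol_lipschitz x s t :
  `|affine_sol x s - affine_sol x t| <= `|drift *m Psi x| * `|s - t|.
Proof. by rewrite affine_solB normrZ mulrC ler_wpM2l ?ler_dist_max2l. Qed.

Lemma affine_sol_is_sol x : X x ->
  is_sol tau setT phase_set vector_field (cstC (embed_in *m x)) +oo%E (affine_sol x).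
Proof.
move=> Xx; set v := drift *m Psi x.
have input_seg t : input_of (seg tau (affine_sol x) t) = x by exact: input_of_affine.
split=> [//|t _ _ e e0|s /andP[_ s0]|t _ _|t t0 _ e e0].
- have v1 : 0 < `|v| + 1 by rewrite ltr_wpDl.
  exists (e / (`|v| + 1)) => [|s _ _ st]; first by rewrite divr_gt0.
  apply: le_lt_trans (affine_sol_lipschitz x s t) _.
  rewrite ltr_pdivlMr // in st; have := normr_ge0 (s - t); nra.
- by rewrite /affine_sol max_l // scale0r addr0.
- split=> //; split; last by rewrite input_seg.
  split=> [|s]; last by rewrite /seg clamp_idem.
  apply/continuous_subspace_setT/(@lipschitz_within_continuous _ _ _ _ _ `|v|) => s s' _ _.
  apply: le_trans (affine_sol_lipschitz _ _ _) _; rewrite ler_wpM2l //.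
  by rewrite opprD addrACA subrr add0r ler_dist_clamp.
- exists 1 => // h h0 _ th _.
  rewrite /vector_field input_seg affine_solB -/v !max_r // addrAC subrr add0r.
  by rewrite scalerA mulVf // scale1r subrr normr0 ltW.
Qed.


Lemma is_sol_eq_affine_sol x c y :
  is_sol tau setT phase_set vector_field (cstC (embed_in *m x)) c y ->
  forall t, - tau <= t -> (t%:E < c)%E -> y t = affine_sol x t.
Proof.
move=> y_sol t tau_t tc; have [_ _ y_init _ _] := y_sol.
have [t0|t_pos] := leP t 0.
  by rewrite y_init ?tau_t // /affine_sol max_l // scale0r addr0.
have y0 : y 0 = embed_in *m x by rewrite y_init // lexx andbT lerNl oppr0.
pose A : 'M[R]_(n, m) := (embed_mx 0 n m)^T.
have A_drift z : A *m (drift *m z) = 0.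
  rewrite /drift -scalemxAl -scalemxAr mulmxA.
  by rewrite tr_embed_mx_mul_disjoint ?leqnn ?orbT // mul0mx scaler0.
(* The first block of the state is frozen, so the input read off the state stays x and the
   vector field is constant along y. *)
have A_nonexp (z : 'cV[R]_m) : `|A *m z| <= `|z| by exact: mx_norm_tr_embed_mx_mul_le.
have A_cont := continuous_on_Ico0_mulmx A_nonexp (is_sol_continuous_on_Ico0 tau0 y_sol).
have A_der : rderive_on_Ico0 c (fun s => A *m y s) (fun=> 0).
  apply: eq_rderive_on_Ico0 (rderive_on_Ico0_mulmx A_nonexp (is_sol_rderive_on_Ico0 y_sol)).
  by move=> r _ _; exact: A_drift.
have A_const s : 0 <= s -> (s%:E < c)%E -> A *m y s = A *m y 0.
  by move=> s0 sc; rewrite (rderive_const_affine A_cont A_der s0 sc) scaler0 addr0.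
have y_der : rderive_on_Ico0 c y (fun=> drift *m Psi x).
  apply: eq_rderive_on_Ico0 (is_sol_rderive_on_Ico0 y_sol) => s s0 sc.
  rewrite /vector_field -[in RHS](input_of_cst x) /input_of /seg clamp0 // addr0.
  by rewrite -/A A_const // y0.
rewrite (rderive_const_affine (is_sol_continuous_on_Ico0 tau0 y_sol) y_der (ltW t_pos) tc).
by rewrite y0 /affine_sol max_r // ltW.
Qed.

Lemma vector_field_Ck0b k : Ckb k X Psi ->
  @Ck0b R (R -> 'cV[R]_m) (@normC R tau m) (@Cspace R tau m) m k
        [set p | setT p.1 /\ phase_set p.2] vector_field.
Proof.
move=> Psi_Ck; apply: (Ck0b_linear_comp (a := w^-1) (b := (T * wt)^-1) Psi_Ck input_of_linear).
- by rewrite invr_gt0.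
- by rewrite invr_gt0 mulr_gt0.
- by move=> h [h_cont _]; exact: norm_input_of_le.
- exact: norm_drift_mul_le.
- exact: CspaceB.
- by move=> t u [_ []].
Qed.

Lemma vector_field_lipschitz_cst (KPsi K : R) x x' t :
  (forall x y, X x -> X y -> `|Psi x - Psi y| <= KPsi * `|x - y|) ->
  0 <= K -> KPsi / (w * wt) <= K * T -> X x -> X x' ->
  `|vector_field t (cstC (embed_in *m x)) - vector_field t (cstC (embed_in *m x'))|
    <= K * normC tau (cstC (embed_in *m x) - cstC (embed_in *m x')).
Proof.
move=> Psi_lip K0 KT Xx Xx'.
have xx'_le : w * `|x - x'| <= normC tau (cstC (embed_in *m x) - cstC (embed_in *m x')).
  rewrite -norm_embed_in_mul mulmxBr.
  apply: (normC_ge_point (s := 0)) => //; last by rewrite lexx andbT lerNl oppr0.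
  by move=> s; apply: continuousB; exact: cst_continuous.
rewrite /vector_field !input_of_cst -mulmxBr.
apply: le_trans (norm_drift_mul_le _) _.
apply: le_trans (ler_wpM2l _ (Psi_lip _ _ Xx Xx')) _; first by rewrite invr_ge0 mulr_ge0 ?ltW.
apply: le_trans (ler_wpM2l K0 xx'_le); rewrite mulrA [K * _]mulrA.
apply: ler_wpM2r; first exact: normr_ge0.
rewrite mulrC ler_pdivrMr ?mulr_gt0 // (_ : K * w * (T * wt) = K * T * (w * wt)); last by ring.
by rewrite -ler_pdivrMr ?mulr_gt0.
Qed.

Lemma opnorm_embed_in : (0 < n)%N -> opnorm embed_in = w.
Proof.
move=> n0; apply: (opnorm_eq (x0 := const_mx 1)); rewrite ?mx_norm_const1 //.
- by move=> x; rewrite norm_embed_in_mul.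
- by rewrite norm_embed_in_mul mx_norm_const1 // mulr1.
Qed.

Lemma opnorm_read_out : (0 < q)%N -> opnorm read_out = wt.
Proof.
move=> q0; apply: (opnorm_eq (x0 := embed_mx n q m *m const_mx 1)).
- exact: norm_read_out_mul_le.
- by rewrite mx_norm_embed_mx_mul // mx_norm_const1.
rewrite /read_out -scalemxAl mulmxA tr_embed_mx_mul_self // mul1mx normrZ mx_norm_const1 //.
by rewrite gtr0_norm // mulr1.
Qed.

Lemma is_NDDE_construction k (KPsi : R) : open X -> Ckb k X Psi ->
  (forall x y, X x -> X y -> `|Psi x - Psi y| <= KPsi * `|x - y|) ->
  is_NDDE k tau T X setT phase_set vector_field embed_in 0 read_out 0 Psi.
Proof.
move=> X_open Psi_Ck Psi_lip; split=> [|//|x Xx|x Xx|].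
- by split; [exact: openT | exact: openC_phase_set].
- by rewrite addr0; split; [split=> //; exact: cst_continuous | rewrite input_of_cst].
- exists +oo%E, (affine_sol x); rewrite addr0 read_out_affine_sol addr0.
  by split; [exact: ltry | split=> //; exact: affine_sol_is_sol].
case: k Psi_Ck => [|k] Psi_Ck /=; last exact: vector_field_Ck0b.
split; last exact: lipschitz_within_continuous Psi_lip.
move=> x Xx c1 y1 c2 y2; rewrite addr0 => y1_sol y2_sol t tau_t t1 t2.
by rewrite (is_sol_eq_affine_sol y1_sol) ?(is_sol_eq_affine_sol y2_sol).
Qed.

End Construction.

Theorem mainTheorem5 (R : realType) (k n q m : nat) (hn : (0 < n)%N) (hq : (0 < q)%N)
    (X : set 'cV[R]_n) (hX : open X)
    (Psi : 'cV[R]_n -> 'cV[R]_q) (hPsi : Ckb k X Psi)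
    (KPsi : R) (hKPsi : 0 <= KPsi)
    (hLip : forall x y, X x -> X y -> `|Psi x - Psi y| <= KPsi * `|x - y|)
    (hm : (n + q <= m)%N)
    (T tau : R) (hT : 0 < T) (htau0 : 0 <= tau) (htauT : tau <= T)
    (w wt K : R) (hw : 0 < w) (hwt : 0 < wt) (hK : 0 <= K)
    (hKT : KPsi / (w * wt) <= K * T) :
  exists (Omy : set (R -> 'cV[R]_m)) (F : R -> (R -> 'cV[R]_m) -> 'cV[R]_m)
         (W : 'M[R]_(m, n)) (b : 'cV[R]_m) (Wt : 'M[R]_(q, m)) (bt : 'cV[R]_q),
    [/\ is_NDDE k tau T X setT Omy F W b Wt bt Psi,
        (forall t u v,
           (exists2 x, X x & u = cstC (W *m x + b)) ->
           (exists2 x, X x & v = cstC (W *m x + b)) ->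
           `|F t u - F t v| <= K * normC tau (u - v)),
        opnorm W = w &
        opnorm Wt = wt].
Proof.
exists (phase_set tau w X), (vector_field T w wt Psi).
exists (embed_in n m w), 0, (read_out n q m wt), 0; split.
- exact: is_NDDE_construction hX hPsi hLip.
- move=> t u v [x Xx ->] [x' Xx' ->]; rewrite !addr0.
  exact: vector_field_lipschitz_cst hLip hK hKT Xx Xx'.
- exact: opnorm_embed_in hm hw hn.
- exact: opnorm_read_out hm hwt hq.
Qed.
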